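(* Let $\theta>0$. For every $x\in\mathbb{R}$, the Hölder exponent of $f_\theta$ at $x$ is \[ H_{f_\theta}(x)=\begin{cases}0 & \text{if } x \text{ is rational},\\ \theta/\tau(x) & \text{if } x \text{ is irrational}.\end{cases} \]
   Context: For $\theta>0$, the generalized Thomae function $f_\theta:\mathbb{R}\to\mathbb{R}$ is defined by $f_\theta(0)=1$, $f_\theta(x)=q^{-\theta}$ if $x$ is rational written as $x=p/q$ with $p\in\mathbb{Z}$, $q\in\mathbb{N}$ and $\gcd(p,q)=1$, and $f_\theta(x)=0$ if $x$ is irrational. For a locally bounded $f:\mathbb{R}\to\mathbb{R}$, $x\in\mathbb{R}$ and $\alpha\ge0$, one writes $f\in\Lambda^\alpha(x)$ if there exist a constant $C>0$ and a polynomial $P$ of degree less than $\alpha$ such that $|f(x+h)-P(h)|\le C|h|^\alpha$ for all $h$ in a neighborhood of $0$. The Hölder exponent of $f$ at $x$ is $H_f(x)=\sup\{\alpha\ge0: f\in\Lambda^\alpha(x)\}$. The irrationality exponent $\tau(x)$ of an irrational number $x$ is the supremum of the real numbers $\tau$ for which the inequality $|x-p/q|<q^{-\tau}$ has infinitely many solutions in nonzero integers $p,q$; one has $\tau(x)\ge2$, and $\tau(x)$ may equal $+\infty$, in which case $\theta/\tau(x)$ is read as $0$. *)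

From HB Require Import structures.
From mathcomp Require Import all_boot all_order all_algebra.
From mathcomp Require Import all_classical all_reals all_analysis.
Set Implicit Arguments. Unset Strict Implicit. Unset Printing Implicit Defensive.
Import Order.TTheory GRing.Theory Num.Theory.
Import numFieldNormedType.Exports.
Local Open Scope classical_set_scope.
Local Open Scope ring_scope.

Definition lowest_denom {R : realType} (x : R) (q : nat) : Prop :=
  (0 < q)%N /\ exists p : int, coprime `|p|%N q /\ x = p%:~R / q%:R.

Definition is_rational {R : realType} (x : R) : Prop :=
  exists p : int, exists q : nat, (0 < q)%N /\ x = p%:~R / q%:R.

Definition thomae {R : realType} (theta : R) (x : R) : R :=
  if x == 0 then 1 else
  match pselect (exists q : nat, lowest_denom x q) with
  | left H => (projT1 (cid H))%:R `^ (- theta)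
  | right _ => 0
  end.

(* f \in Lambda^alpha(x): polynomial P of degree < alpha (size P - 1 = deg P) *)
Definition pointwise_holder {R : realType} (f : R -> R) (x alpha : R) : Prop :=
  exists C : R, 0 < C /\
  exists P : {poly R}, ((size P)%:R - 1 < alpha) /\
    \forall h \near (0 : R), `|f (x + h) - P.[h]| <= C * `|h| `^ alpha.

Definition holder_exponent {R : realType} (f : R -> R) (x : R) : \bar R :=
  ereal_sup [set (a%:E)%E | a in [set a : R | 0 <= a /\ pointwise_holder f x a]].

Definition irrationality_exponent {R : realType} (x : R) : \bar R :=
  ereal_sup [set (t%:E)%E | t in [set t : R |
    infinite_set [set pq : int * int | (pq.1 != 0) && (0 < pq.2) /\
       `|x - pq.1%:~R / pq.2%:~R| < (pq.2%:~R) `^ (- t)]]].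

From HB Require Import structures.
From mathcomp Require Import all_boot all_order all_algebra.
From mathcomp Require Import all_classical all_reals all_analysis.
From mathcomp Require Import borel_hierarchy ring lra zify.
Import Order.TTheory GRing.Theory Num.Theory.
Import numFieldNormedType.Exports.
Set Implicit Arguments.
Unset Strict Implicit.
Unset Printing Implicit Defensive.
Local Open Scope classical_set_scope.
Local Open Scope ring_scope.

(* The generalized Thomae function f vanishes on the dense set of irrationals.  Hence if
   f is in Lambda^a(x) with a > 0, comparing with f at nearby irrational points shows that
   the polynomial P satisfies |P(h)| <= C |h|^a, so that |f(x + h)| <= 2C |h|^a.  At a
   rational x this contradicts f(x) > 0.  At an irrational x, evaluating at the p/q with
   |x - p/q| < q^-t gives q^-theta <= 2C q^-(a t), which holds for infinitely many q only
   if a t <= theta: hence H(x) <= theta / tau(x).  Conversely, if a t <= theta and x has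
   only finitely many approximants of order t, every rational p/q close to x satisfies
   q^-t <= |x - p/q|, so f(p/q) = q^-theta <= |x - p/q|^a and f is in Lambda^a(x) with
   P = 0.  The approximants p = floor(q x) show tau(x) >= 1. *)

Section irrational_points.
Context {R : realType}.
Implicit Types x y : R.

Lemma is_rationalP x : is_rational x <-> rational x.
Proof.
rewrite rationalP; split=> [[p [q [_ ->]]]|[p [q ->]]]; first by exists p, q.
case: q => [|q]; last by exists p, q.+1.
by exists 0, 1%N; split => //; rewrite invr0 !mulr0 mul0r.
Qed.

Lemma rational0 : rational (0 : R).
Proof. by exists 0 => //; rewrite rmorph0. Qed.

Lemma irrational_neq0 x : irrational x -> x != 0.
Proof. by apply: contra_notN => /eqP ->; exact: rational0. Qed.

Lemma rational_frac (p q : int) : 0 < q -> rational (p%:~R / q%:~R : R).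
Proof. by case: q => // q _; apply/rationalP; exists p, q; rewrite pmulrn. Qed.

Lemma dense_irrational : dense (@irrational R).
Proof. by have [F oF ->] := @irrational_Gdelta R; exact: Baire. Qed.

Lemma near_irrational y (P : R -> Prop) :
  (\forall z \near y, P z) -> exists2 z, irrational z & P z.
Proof.
move=> /nbhs_ballP[e e0 yeP].
have [z [/yeP Pz irrz]] :=
  @dense_irrational (ball y e) (ex_intro _ y (ballxx y e0)) (ball_open y e).
by exists z.
Qed.

Lemma ge0_near_irrational (g : R -> R) x y : {for y, continuous g} ->
  (\forall h \near y, irrational (x + h) -> 0 <= g h) -> 0 <= g y.
Proof.
move=> gy gP; rewrite leNgt; apply/negP => gy0.
have : \forall z \near (x + y), irrational z -> False.
  apply/nbhsDr; near=> h.
  have gh0 : g h < 0 by near: h; exact: cvgr_lt _ gy _ gy0.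
  have gh : irrational (x + h) -> 0 <= g h by near: h.
  by move=> /gh; rewrite leNgt gh0.
by move=> /near_irrational[z irrz /(_ irrz)].
Unshelve. all: end_near.
Qed.

End irrational_points.

Section power_bounds.
Context {R : realType}.

Lemma continuous_normr_powR (a : R) : 0 < a -> continuous (fun h : R => `|h| `^ a).
Proof.
move=> a0 h; have [->|h0] := eqVneq h 0.
  apply/cvgrPdist_lt => e e0; rewrite normr0 powR0 ?gt_eqF//.
  near=> z; rewrite sub0r normrN ger0_norm ?powR_ge0//.
  have -> : e = (e `^ a^-1) `^ a by rewrite -powRrM mulVf ?gt_eqF// powRr1 ?ltW.
  rewrite gt0_ltr_powR ?nnegrE ?powR_ge0//.
  by near: z; apply: (@nbhs0_lt R R); rewrite powR_gt0.
have powR_cont : {for `|h|, continuous (fun b : R => b `^ a)}.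
  apply: differentiable_continuous; apply/derivable1_diffP.
  by apply: derivable_powR; rewrite in_itv/= normr_gt0 h0.
have norm_cont : {for h, continuous (Num.norm : R -> R)} by exact: norm_continuous.
exact: (continuous_comp norm_cont powR_cont).
Unshelve. all: end_near.
Qed.

Lemma natr_powRN_le1 (q : nat) (s : R) : (0 < q)%N -> 0 <= s -> q%:R `^ (- s) <= 1.
Proof.
move=> q0 s0; rewrite -[leRHS](powRr0 (q%:R : R)).
by apply: ler_powR; rewrite ?ler1n // oppr_le0.
Qed.

Lemma ler_powR_root (g y B : R) : 0 < g -> 0 <= y -> y `^ g <= B -> y <= B `^ g^-1.
Proof.
move=> g0 y0 yB; have B0 : 0 <= B := le_trans (powR_ge0 _ _) yB.
rewrite -[leLHS](powRr1 y0) -(@mulfV _ g) ?gt_eqF// powRrM.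
by apply: ge0_ler_powR => //; rewrite ?nnegrE ?powR_ge0 ?invr_ge0 ?ltW.
Qed.

Lemma natr_le_powRN (q : nat) (C s u : R) : (0 < q)%N -> s < u ->
  q%:R `^ (- s) <= C * q%:R `^ (- u) -> q%:R <= C `^ (u - s)^-1.
Proof.
move=> q0 su decay; have qR : (0 : R) < q%:R by rewrite ltr0n.
apply: ler_powR_root; [by rewrite subr_gt0 | exact: ltW |].
rewrite addrC powRD ?(gt_eqF qR) ?implybT //.
apply: le_trans (ler_wpM2r (powR_ge0 _ _) decay) _.
by rewrite -mulrA -powRD ?(gt_eqF qR) ?implybT // addNr powRr0 mulr1.
Qed.

End power_bounds.

Section vanishing_on_irrationals.
Context {R : realType} (f : R -> R).
Hypothesis f_irrational : forall z, irrational z -> f z = 0.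

Lemma vanishing_holder_poly_bound (x a C : R) (P : {poly R}) : 0 < a ->
  (\forall h \near 0, `|f (x + h) - P.[h]| <= C * `|h| `^ a) ->
  \forall h \near 0, `|P.[h]| <= C * `|h| `^ a.
Proof.
move=> a0 /nbhs_norm0P[d /= d0 fP]; apply/nbhs_norm0P; exists d => // h hd.
rewrite -subr_ge0; apply: (@ge0_near_irrational _ (fun h => C * `|h| `^ a - `|P.[h]|) x).
  apply: cvgB; first by apply: cvgM; [exact: cvg_cst | exact: continuous_normr_powR].
  by apply: cvg_norm; exact: continuous_horner.
apply: filterS (cvgr_lt _ (@norm_continuous _ R h) _ hd) => z zd irr_xz.
by rewrite subr_ge0 -normrN -sub0r -(f_irrational irr_xz); exact: fP.
Qed.

Lemma vanishing_holder_bound (x a : R) : 0 < a -> pointwise_holder f x a ->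
  exists2 C, 0 < C & \forall h \near 0, `|f (x + h)| <= C * `|h| `^ a.
Proof.
move=> a0 [C [C0 [P [_ fP]]]]; exists (C + C); first exact: addr_gt0.
have PP := vanishing_holder_poly_bound a0 fP.
near=> h; rewrite -[f _](subrK P.[h]) mulrDl.
by apply: le_trans (ler_normD _ _) (lerD _ _); near: h.
Unshelve. all: end_near.
Qed.

End vanishing_on_irrationals.

Section thomae.
Context {R : realType} (theta : R).
Implicit Types (x y : R) (p : int) (q : nat).

Lemma lowest_denom_ratr (r : rat) : lowest_denom (ratr r : R) `|denq r|%N.
Proof.
split; first by rewrite absz_gt0 denq_neq0.
exists (numq r); split; first by rewrite coprime_num_den.
by rewrite /ratr natr_absz gtr0_norm ?denq_gt0.
Qed.

Lemma lowest_denom_dvdn y q' p q :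
  lowest_denom y q' -> (0 < q)%N -> y = p%:~R / q%:R -> (q' %| q)%N.
Proof.
move=> [q'0 [p' [cop ->]]] q0 /eqP.
rewrite eqr_div ?pnatr_eq0 -?lt0n// -[q%:R]/(q%:~R) -[q'%:R]/(q'%:~R).
rewrite -!intrM eqr_int => /eqP/(congr1 absz); rewrite !abszM /= => eN.
by rewrite coprime_sym in cop; rewrite -(Gauss_dvdr q cop) eN dvdn_mull.
Qed.

Lemma lowest_denom_unique y q q' : lowest_denom y q -> lowest_denom y q' -> q = q'.
Proof.
move=> yq yq'; apply/eqP; rewrite eqn_dvd.
have [q0 [p [_ yE]]] := yq; have [q'0 [p' [_ yE']]] := yq'.
by rewrite (lowest_denom_dvdn yq q'0 yE') (lowest_denom_dvdn yq' q0 yE).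
Qed.

Lemma lowest_denom_rational y q : lowest_denom y q -> rational y.
Proof. by move=> [_ [p [_ ->]]]; apply/rationalP; exists p, q. Qed.

Lemma rational_lowest_denom y : rational y -> exists q, lowest_denom y q.
Proof. by move=> [r _ <-]; exists `|denq r|%N; exact: lowest_denom_ratr. Qed.

Lemma thomae_lowest_denom y q :
  y != 0 -> lowest_denom y q -> thomae theta y = q%:R `^ (- theta).
Proof.
move=> y0 yq; rewrite /thomae (negbTE y0); case: pselect => [yQ|[]]; last by exists q.
by case: (cid yQ) => q' yq' /=; rewrite (lowest_denom_unique yq' yq).
Qed.

Lemma thomae_irrational y : irrational y -> thomae theta y = 0.
Proof.
move=> yI; rewrite /thomae (negbTE (irrational_neq0 yI)).
by case: pselect => // -[q yq]; case: yI; exact: lowest_denom_rational yq.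
Qed.

Lemma thomae_gt0 y : rational y -> 0 < thomae theta y.
Proof.
have [->|y0 /rational_lowest_denom[q yq]] := eqVneq y 0; first by rewrite /thomae eqxx.
by rewrite (thomae_lowest_denom y0 yq) powR_gt0 // ltr0n; case: yq.
Qed.

Lemma thomae_ge0 y : 0 <= thomae theta y.
Proof. by rewrite /thomae; case: ifP => // _; case: pselect => // yQ; exact: powR_ge0. Qed.

Lemma thomae_le1 y : 0 <= theta -> thomae theta y <= 1.
Proof.
move=> theta0; rewrite /thomae; case: ifP => // _; case: pselect => // yQ.
by case: (cid yQ) => q [q0 _] /=; exact: natr_powRN_le1.
Qed.

Lemma thomae_frac_ge p q : 0 <= theta -> p != 0 -> (0 < q)%N ->
  q%:R `^ (- theta) <= thomae theta (p%:~R / q%:R).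
Proof.
move=> theta0 p0 q0; set y := _ / _.
have y0 : y != 0 by rewrite mulf_neq0 ?invr_eq0 ?intr_eq0 ?pnatr_eq0 -?lt0n.
have [q' yq'] : exists q', lowest_denom y q'.
  by apply: rational_lowest_denom; apply/rationalP; exists p, q.
rewrite (thomae_lowest_denom y0 yq') !powRN lef_pV2 ?posrE ?powR_gt0 ?ltr0n //; last by case: yq'.
apply: ge0_ler_powR; rewrite ?nnegrE ?ler0n // ler_nat.
by apply: dvdn_leq => //; exact: lowest_denom_dvdn yq' q0 erefl.
Qed.

Lemma thomae_holder0 x : 0 <= theta -> pointwise_holder (thomae theta) x 0.
Proof.
move=> theta0; exists 1; split => //; exists 0; split; first by rewrite size_poly0 sub0r ltrN10.
apply: filterE => h; rewrite horner0 subr0 powRr0 mul1r ger0_norm ?thomae_ge0 //.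
exact: thomae_le1.
Qed.

Lemma rational_not_holder_thomae x a :
  rational x -> 0 < a -> ~ pointwise_holder (thomae theta) x a.
Proof.
move=> xQ a0 /(vanishing_holder_bound (@thomae_irrational) a0)[C _ /nbhs_singleton].
by rewrite addr0 normr0 powR0 ?gt_eqF // mulr0 normr_le0 gt_eqF // thomae_gt0.
Qed.

End thomae.

Section approximants.
Context {R : realType}.
Implicit Types x t : R.

Definition approximants x t : set (int * int) :=
  [set pq | (pq.1 != 0) && (0 < pq.2) /\
            `|x - pq.1%:~R / pq.2%:~R| < pq.2%:~R `^ (- t)].

Lemma finite_int_ball (K : nat) : finite_set [set z : int | (`|z| <= K)%N].
Proof.
apply: sub_finite_set (finite_image (fun n : nat => n%:Z - K%:Z) (finite_II (K + K).+1)).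
by move=> z /= zK; exists (absz (z + K%:Z)); rewrite /=; lia.
Qed.

Lemma approximants_finite x t (B : R) : 0 <= t ->
  (forall pq, approximants x t pq -> pq.2%:~R <= B) -> finite_set (approximants x t).
Proof.
move=> t0 qB; set K := Num.truncn ((`|x| + 1) * B).
apply: sub_finite_set (finite_setX (finite_int_ball K) (finite_int_ball (Num.truncn B))).
move=> [p q] pq; have [/andP[/= _ q0] close] := pq.
case: q q0 close pq => // q q0 close pq; split => /=; last first.
  by rewrite truncn_ge_nat ?(le_trans _ (qB _ pq)) // natr_absz.
have qR : (0 : R) < q%:R by rewrite ltr0n.
rewrite truncn_ge_nat ?mulr_ge0 ?addr_ge0 ?(le_trans _ (qB _ pq)) //.
have pE : (absz p)%:R = `|p%:~R / q%:R| * q%:R :> R.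
  by rewrite normf_div (gtr0_norm qR) divfK ?natr_absz ?intr_norm ?gt_eqF.
rewrite pE; apply: ler_pM => //; last exact: qB pq.
have := ler_normD x (p%:~R / q%:R - x); rewrite addrC subrK => /le_trans; apply.
rewrite lerD2l distrC; apply/ltW/(lt_le_trans close).
exact: natr_powRN_le1.
Qed.

Lemma floor_approximant x (q : nat) :
  1 < q%:R * `|x| -> approximants x 1 (Num.floor (q%:R * x), q%:Z).
Proof.
move=> qx; have qR : (0 : R) < q%:R.
  by rewrite ltr0n lt0n; apply: contraTneq qx => ->; rewrite mul0r ltr10.
have q0 : (0 < q)%N by rewrite -(ltr0n R).
set p := Num.floor _; split => /=.
  rewrite ltz_nat q0 andbT floor_neq0; have [x0|x0] := ltP x 0; first by rewrite pmulr_rlt0 ?x0.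
  by rewrite ltW ?orbT // -(ger0_norm x0).
rewrite powR_inv1 ?ler0n // -pmulrn.
have -> : x - p%:~R / q%:R = (q%:R * x - p%:~R) / q%:R by field; rewrite gt_eqF.
rewrite normf_div (gtr0_norm qR) ger0_norm ?subr_ge0 ?floor_le //.
by rewrite -[ltRHS]mul1r ltr_pM2r ?invr_gt0 // ltrBlDr addrC -intrD1 floorD1_gt.
Qed.

Lemma approximants_one_infinite x : x != 0 -> infinite_set (approximants x 1).
Proof.
move=> x0 fin; apply: infinite_nat.
pose q n := (n + Num.truncn `|x|^-1).+1.
pose g n := (Num.floor ((q n)%:R * x), (q n)%:Z).
have gA n : approximants x 1 (g n).
  apply: floor_approximant; rewrite -ltr_pdivrMr ?normr_gt0 // div1r.
  by apply: lt_le_trans (truncnS_gt _) _; rewrite ler_nat ltnS leq_addl.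
suff <- : g @^-1` approximants x 1 = [set: nat].
  apply: (finite_preimage _ fin) => m n _ _ [_ /eqP].
  by rewrite eqn_add2r => /eqP.
by rewrite -subTset => n _; exact: gA.
Qed.

Lemma irrationality_exponent_ge1 x : x != 0 -> (1%:E <= irrationality_exponent x)%E.
Proof. by move=> x0; apply: ereal_sup_ubound; exists 1 => //; exact: approximants_one_infinite. Qed.

End approximants.

Lemma ereal_sup_EFin_itv (R : realType) (A : set R) (c : R) :
  A 0 -> (forall a, A a -> a <= c) -> (forall a, 0 < a < c -> A a) ->
  ereal_sup [set a%:E | a in A] = c%:E.
Proof.
move=> A0 Ac Aitv; have A_ub : has_ubound A by exists c.
rewrite ereal_sup_EFin //; last by exists 0.
congr EFin; apply/le_anti/andP; split; first by apply: ge_sup; [exists 0|].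
have s0 : 0 <= sup A := ub_le_sup A_ub A0.
rewrite leNgt; apply/negP => sc.
have : (sup A + c) / 2 <= sup A by apply: (ub_le_sup A_ub); apply: Aitv; apply/andP; split; lra.
lra.
Qed.

Section holder_exponent_thomae.
Context {R : realType} {theta : R}.
Hypothesis theta_ge0 : 0 <= theta.
Implicit Types x : R.

Lemma holder_approximants_bound x a t : irrational x -> 0 < a ->
  pointwise_holder (thomae theta) x a -> infinite_set (approximants x t) -> a * t <= theta.
Proof.
move=> xI a0 fH; apply: contra_notP => /negP; rewrite -ltNge => theta_lt.
have t0 : 0 < t by rewrite -(pmulr_rgt0 _ a0) (le_lt_trans theta_ge0).
have [C C0 /nbhs_norm0P[d /= d0 fC]] := vanishing_holder_bound (@thomae_irrational _ theta) a0 fH.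
(* The denominators are bounded: near x since q^-theta <= f(p/q) <= C q^-(a t) with
   a t > theta, away from x since d <= q^-t there. *)
apply: (@approximants_finite _ _ _ (C `^ (a * t - theta)^-1 + d^-1 `^ t^-1)).
  exact: ltW.
move=> [p q] [/andP[/= p0 q0] /=]; case: q q0 => // q q0 close.
have qR : (0 : R) < q%:R by rewrite ltr0n.
have [near_x|far_x] := ltP `|p%:~R / q%:R - x| d.
- apply: (@le_trans _ _ (C `^ (a * t - theta)^-1)); last by rewrite lerDl powR_ge0.
  apply: (natr_le_powRN q0 theta_lt).
  apply: le_trans (thomae_frac_ge theta_ge0 p0 q0) _.
  have := fC _ near_x; rewrite addrC subrK ger0_norm ?thomae_ge0 // => /le_trans; apply.
  apply: ler_wpM2l; first exact: ltW.
  rewrite [a * t]mulrC -mulNr powRrM.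
  apply: ge0_ler_powR; rewrite ?nnegrE ?powR_ge0 ?(ltW a0) //.
  by rewrite distrC; exact: ltW close.
- apply: (@le_trans _ _ (d^-1 `^ t^-1)); last by rewrite lerDr powR_ge0.
  apply: ler_powR_root t0 (ltW qR) _.
  rewrite -lef_pV2 ?posrE ?invr_gt0 ?powR_gt0 // invrK -powRN.
  by apply: le_trans far_x _; rewrite distrC; exact: ltW.
Qed.

Lemma finite_approximants_holder x a t : irrational x -> 0 < a -> a * t <= theta ->
  finite_set (approximants x t) -> pointwise_holder (thomae theta) x a.
Proof.
move=> xI a0 at_le fin.
(* Near x, a rational x + h = p/q avoids 0 and the finitely many approximants, so that
   q^-t <= |h| and f(x + h) = q^-theta <= |h|^a. *)
pose F : set R := [set 0] `|` [set pq.1%:~R / pq.2%:~R | pq in approximants x t].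
have F_closed : closed F.
  have R_T1 : accessible_space R by exact/hausdorff_accessible/Rhausdorff.
  apply: (accessible_finite_set_closed.1 R_T1).
  by rewrite finite_setU; split; [exact: finite_set1 | exact: finite_image].
have xF : ~ F x.
  move=> [/= x0 | [[p q] [/andP[_ q0] _] /= xE]]; apply: xI.
  - by rewrite x0; exact: rational0.
  - by rewrite -xE; exact: rational_frac.
have /nbhs0P near_F : nbhs x (~` F).
  by apply: open_nbhs_nbhs; split => //; exact: closed_openC.
exists 1; split => //; exists 0; split; first by rewrite size_poly0 sub0r (lt_trans _ a0) // ltrN10.
apply: filterS near_F => h xhF; rewrite horner0 subr0 mul1r ger0_norm ?thomae_ge0 //.
have [xhQ|xhI] := pselect (rational (x + h)); last by rewrite thomae_irrational ?powR_ge0.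
have xh0 : x + h != 0 by apply: contra_notN xhF => /eqP ->; left.
have [q xhq] := rational_lowest_denom xhQ; have [q0 [p [_ xhE]]] := xhq.
have p0 : p != 0 by apply: contraNneq xh0 => p0; rewrite xhE p0 mul0r.
have qh : q%:R `^ (- t) <= `|h|.
  rewrite leNgt; apply/negP => close; apply: xhF; right; exists (p, q%:Z) => /=.
    by split; rewrite ?p0 // -xhE opprD addrA subrr add0r normrN.
  by rewrite xhE.
rewrite (thomae_lowest_denom theta xh0 xhq); apply: (@le_trans _ _ ((q%:R `^ (- t)) `^ a)).
  by rewrite -powRrM; apply: ler_powR; rewrite ?ler1n // mulNr lerN2 mulrC.
by apply: ge0_ler_powR; rewrite ?nnegrE ?powR_ge0 // ltW.
Qed.

Lemma irrationality_exponent_le_holder x a : irrational x -> 0 < a ->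
  pointwise_holder (thomae theta) x a -> (irrationality_exponent x <= (theta / a)%:E)%E.
Proof.
move=> xI a0 aH; apply: ge_ereal_sup => _ [t tA <-].
by rewrite lee_fin ler_pdivlMr // mulrC; exact: holder_approximants_bound xI a0 aH tA.
Qed.

Lemma holder_lt_irrationality_exponent x a : irrational x -> 0 < a ->
  (irrationality_exponent x < (theta / a)%:E)%E -> pointwise_holder (thomae theta) x a.
Proof.
move=> xI a0 tau_lt; apply: (@finite_approximants_holder x a (theta / a)) => //.
  by rewrite mulrC divfK ?gt_eqF.
apply: contrapT => infA.
have : ((theta / a)%:E <= irrationality_exponent x)%E.
  by apply: ereal_sup_ubound; exists (theta / a).
by rewrite leNgt tau_lt.
Qed.

Lemma holder_exponent_thomae_rational x :
  rational x -> holder_exponent (thomae theta) x = 0%E.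
Proof.
move=> xQ; apply: ereal_sup_EFin_itv => [|a [a0 aH]|a /andP[a0 a_lt0]].
- by split => //; exact: thomae_holder0.
- rewrite leNgt; apply/negP => a_gt0; exact: rational_not_holder_thomae xQ a_gt0 aH.
- by have := lt_trans a0 a_lt0; rewrite ltxx.
Qed.

Lemma holder_exponent_thomae_irrational x : irrational x ->
  holder_exponent (thomae theta) x =
  match irrationality_exponent x with (t%:E)%E => (theta / t)%:E | _ => 0%E end.
Proof.
move=> xI; have tau_ge1 := irrationality_exponent_ge1 (irrational_neq0 xI).
have -> : match irrationality_exponent x with (t%:E)%E => (theta / t)%:E | _ => 0%E end =
    (match irrationality_exponent x with (t%:E)%E => theta / t | _ => 0 end)%:E.
  by case: irrationality_exponent.
apply: ereal_sup_EFin_itv => [|a [a0 aH]|a /andP[a0 ac]].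
- by split => //; exact: thomae_holder0.
- move: a0; rewrite le_eqVlt => /predU1P[<-|a_gt0].
    case: irrationality_exponent tau_ge1 => // t; rewrite lee_fin => t1.
    by rewrite divr_ge0 // (le_trans ler01 t1).
  move: (irrationality_exponent_le_holder xI a_gt0 aH) tau_ge1.
  case: irrationality_exponent => [t||] //; rewrite !lee_fin => ta t1.
  by rewrite ler_pdivlMr ?(lt_le_trans ltr01) // mulrC -ler_pdivlMr.
- case tauE : irrationality_exponent ac => [t||] ac;
    [|by have := lt_trans a0 ac; rewrite ltxx..].
  have t0 : 0 < t by move: tau_ge1; rewrite tauE lee_fin; exact: lt_le_trans ltr01.
  split; first exact: ltW.
  apply: (holder_lt_irrationality_exponent xI a0); rewrite tauE lte_fin.
  by rewrite ltr_pdivlMr // mulrC -ltr_pdivlMr.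
Qed.

End holder_exponent_thomae.

Theorem mainTheorem3 (R : realType) (theta : R) (htheta : 0 < theta) (x : R) :
  holder_exponent (thomae theta) x =
  (if `[< is_rational x >] then 0%E
   else match irrationality_exponent x with
        | (t%:E)%E => (theta / t)%:E
        | _ => 0%E
        end).
Proof.
case: asboolP => [/is_rationalP xQ | xNQ].
  by rewrite (holder_exponent_thomae_rational (ltW htheta) xQ).
have xI : irrational x by move=> /is_rationalP.
by rewrite (holder_exponent_thomae_irrational (ltW htheta) xI).
Qed.
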